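(* The distributive law $\zeta\colon T(\partial)\otimes_{\mathbb K}T(\chi)\to T(\chi)\otimes_{\mathbb K}T(\partial)$ descends to distributive laws of $\mathbb K$-algebras $\mathrm{Mag}\otimes_{\mathbb K}\mathrm{Braid}\to\mathrm{Braid}\otimes_{\mathbb K}\mathrm{Mag}$, $\mathrm{Simp}\otimes_{\mathbb K}\mathrm{Braid}\to\mathrm{Braid}\otimes_{\mathbb K}\mathrm{Simp}$, $\mathrm{Mag}\otimes_{\mathbb K}\mathrm{Sym}\to\mathrm{Sym}\otimes_{\mathbb K}\mathrm{Mag}$ and $\mathrm{Simp}\otimes_{\mathbb K}\mathrm{Sym}\to\mathrm{Sym}\otimes_{\mathbb K}\mathrm{Simp}$.
   Context: Let $\Bbbk$ be a field and $\mathbb{K}=\bigoplus_{n\in\mathbb N}\Bbbk1_n$ with $1_n1_m=\delta_{nm}1_n$. A faithful $\mathbb K$-bimodule is $V=\bigoplus_{n,m}V_{n,m}$ with $1_nx1_m=x$ for $x\in V_{n,m}$; $(V\otimes_{\mathbb K}W)_{n,\ell}=\bigoplus_mV_{n,m}\otimes W_{m,\ell}$. A $\mathbb K$-algebra is a faithful $\mathbb K$-bimodule with associative multiplication and unit $\mathbb K\to V$; $T(V)$ denotes the free $\mathbb K$-algebra. $\partial$ has basis $\partial^n_j\in\partial_{n+1,n}$ ($n\ge0$, $0\le j\le n$), $\chi$ has basis $\chi^n_i\in\chi_{n,n}$ ($n\ge1$, $0\le i\le n-1$). $\mathrm{Mag}=T(\partial)/\langle\partial^{n+1}_i\partial^n_j-\partial^{n+1}_{j+1}\partial^n_i:0\le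 i<j\le n\rangle$; $\mathrm{Simp}=T(\partial)/\langle\partial^{n+1}_i\partial^n_j-\partial^{n+1}_{j+1}\partial^n_i:0\le i\le j\le n\rangle$; $\mathrm{Braid}=T(\chi)/\langle\chi^n_i\chi^n_j-\chi^n_j\chi^n_i\ (|i-j|\ge2),\ \chi^n_i\chi^n_{i+1}\chi^n_i-\chi^n_{i+1}\chi^n_i\chi^n_{i+1}\ (0\le i\le n-2)\rangle$; $\mathrm{Sym}=\mathrm{Braid}/\langle\chi^n_i\chi^n_i-1_n\rangle$. A $\mathbb K$-bimodule map $\omega\colon\mathcal B\otimes_{\mathbb K}\mathcal A\to\mathcal A\otimes_{\mathbb K}\mathcal B$ between $\mathbb K$-algebras is a distributive law if $\omega(\mu_{\mathcal B}\otimes\mathcal A)=(\mathcal A\otimes\mu_{\mathcal B})(\omega\otimes\mathcal B)(\mathcal B\otimes\omega)$, $\omega(\mathcal B\otimes\mu_{\mathcal A})=(\mu_{\mathcal A}\otimes\mathcal B)(\mathcal A\otimes\omega)(\omega\otimes\mathcal A)$, $\omega(b\otimes1)=1\otimes b$, $\omega(1\otimes a)=a\otimes1$. $\zeta$ is the distributive law of free $\mathbb K$-algebras defined on generators by $\zeta(\partial_i^n\otimes\chi_j^n)=\chi^{n+1}_{j+1}\otimes\partial^n_i$ if $i<j$; $\chi^{n+1}_{i+1}\chi^{n+1}_i\otimes\partial^n_{i+1}$ if $i=j$; $\chi^{n+1}_{i-1}\chi^{n+1}_i\otimes\partial^n_{i-1}$ if $i=j+1$; $\chi^{n+1}_j\otimes\partial^n_i$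 if $i>j+1$, extended to words by successive application. ''Descends'' means $\zeta$ induces a well-defined map between the quotient bimodules which is a distributive law. *)

From HB Require Import structures.
From mathcomp Require Import all_boot all_order all_algebra.
From mathcomp Require Import finmap.
From mathcomp.multinomials Require Import monalg.
Set Implicit Arguments. Unset Strict Implicit. Unset Printing Implicit Defensive.
Import GRing.Theory.
Local Open Scope ring_scope.

(* Words.  A word is a pair (m, s) : nat * seq nat.                     *)
(*  - in T(partial): (m, [:: j_1; ...; j_r]) is the path                *)
(*      partial^{m+r-1}_{j_1} ... partial^{m}_{j_r}  in T_{m+r, m};      *)
(*      (m, [::]) is 1_m.                                               *)
(*  - in T(chi): (n, [:: i_1; ...; i_r]) is chi^n_{i_1} ... chi^n_{i_r}  *)
(*      in T_{n,n}; (n, [::]) is 1_n.                                   *)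
(* In both cases the source (right index) is w.1 and the product of     *)
(* composable words x y (src x = tgt y) is (y.1, x.2 ++ y.2).           *)
Definition word := (nat * seq nat)%type.

Definition wcat (x y : word) : word := (y.1, x.2 ++ y.2).

(* A K-algebra presented as T(V)/<p - q : (p,q) relation>, given by the  *)
(* validity predicate of words of T(V), the target index of words, and  *)
(* the (binomial) relations.                                            *)
Record pres := Pres {
  pvalid : word -> bool;
  ptgt : word -> nat;
  prel : word -> word -> Prop
}.

Fixpoint dvalid_s (m : nat) (s : seq nat) : bool :=
  match s with
  | [::] => true
  | j :: s' => (j <= m + size s')%N && dvalid_s m s'
  end.
Definition dvalid (w : word) : bool := dvalid_s w.1 w.2.
Definition dtgt (w : word) : nat := (w.1 + size w.2)%N.

Definition cvalid (w : word) : bool := all (fun i => i < w.1)%N w.2.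
Definition ctgt (w : word) : nat := w.1.

Definition mag_rel (p q : word) : Prop :=
  exists n i j, (i < j <= n)%N /\ p = (n, [:: i; j]) /\ q = (n, [:: j.+1; i]).
Definition simp_rel (p q : word) : Prop :=
  exists n i j, (i <= j <= n)%N /\ p = (n, [:: i; j]) /\ q = (n, [:: j.+1; i]).
Definition braid_rel (p q : word) : Prop :=
  (exists n i j, (i < n)%N /\ (j < n)%N /\ (2 <= `|i - j|)%N /\
       p = (n, [:: i; j]) /\ q = (n, [:: j; i]))
  \/ (exists n i, (i.+1 < n)%N /\
       p = (n, [:: i; i.+1; i]) /\ q = (n, [:: i.+1; i; i.+1])).
Definition sym_rel (p q : word) : Prop :=
  braid_rel p q \/ (exists n i, (i < n)%N /\ p = (n, [:: i; i]) /\ q = (n, [::])).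

Definition Mag := Pres dvalid dtgt mag_rel.
Definition Simp := Pres dvalid dtgt simp_rel.
Definition Braid := Pres cvalid ctgt braid_rel.
Definition Sym := Pres cvalid ctgt sym_rel.

(* The map zeta on basis tensors (word of T(partial)) (x) (word of T(chi)), *)
(* extended to words by successive application.                        *)
Definition zeta1 (i j : nat) : seq nat * nat :=
  if (i < j)%N then ([:: j.+1], i)
  else if i == j then ([:: i.+1; i], i.+1)
  else if i == j.+1 then ([:: i.-1; i], i.-1)
  else ([:: j], i).

(* one letter partial_i past a chi-word (leftmost chi letter first) *)
Fixpoint zetaL (i : nat) (t : seq nat) : seq nat * nat :=
  match t with
  | [::] => ([::], i)
  | j :: t' => let: (u, i1) := zeta1 i j in
               let: (u', i2) := zetaL i1 t' in (u ++ u', i2)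
  end.

(* a partial-word, given reversed (rightmost letter first), past a chi-word *)
Fixpoint zetaR (rs t : seq nat) : seq nat * seq nat :=
  match rs with
  | [::] => (t, [::])
  | i :: rs' => let: (t1, i1) := zetaL i t in
                let: (t2, s2) := zetaR rs' t1 in (t2, rcons s2 i1)
  end.

Definition zetab (p : word * word) : word * word :=
  let: ((m, s), (_, t)) := p in
  let: (t', s') := zetaR (rev s) t in ((m + size s, t'), (m, s')).

Section Lin.
Variable k : fieldType.

Inductive span {V : lmodType k} (S : V -> Prop) : V -> Prop :=
| span0 : span S 0
| spanS (c : k) (s v : V) : S s -> span S v -> span S (c *: s + v).

Definition lin {X Y : choiceType} (f : X -> Y) (p : {malg k[X]}) : {malg k[Y]} :=
  \sum_(x <- msupp p) << p@_x *g f x >>.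

(* bilinear extension of a partial map of bases (None = product is 0) *)
Definition bil {X Y Z : choiceType} (f : X -> Y -> option Z)
    (p : {malg k[X]}) (q : {malg k[Y]}) : {malg k[Z]} :=
  \sum_(x <- msupp p) \sum_(y <- msupp q)
     oapp (fun z => << p@_x * q@_y *g z >>) 0 (f x y).

Definition vec := malg word k.
Definition vec2 := malg (word * word)%type k.
Definition vec3 := malg ((word * word) * word)%type k.

Definition vvalid (P : pres) (v : vec) : Prop :=
  forall x, x \in msupp v -> pvalid P x.

Definition amul (P : pres) (a b : vec) : vec :=
  bil (fun x y => if x.1 == ptgt P y then Some (wcat x y) else None) a b.

Definition ideal (P : pres) : vec -> Prop :=
  span (fun r => exists (u v : vec) p q, vvalid P u /\ vvalid P v /\
          pvalid P p /\ pvalid P q /\ prel P p q /\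
          r = amul P (amul P u (<< p >> - << q >>)) v).

(* tensor products over K = (+)_n k 1_n *)
Definition tprod (P Q : pres) (a b : vec) : vec2 :=
  bil (fun x y => if x.1 == ptgt Q y then Some (x, y) else None) a b.
Definition tprod3 (P Q R : pres) (a b c : vec) : vec3 :=
  bil (fun xy z => if xy.2.1 == ptgt R z then Some (xy, z) else None)
      (tprod P Q a b) c.

Definition tens3 (P Q R : pres) : vec3 -> Prop :=
  span (fun t => exists a b c, vvalid P a /\ vvalid Q b /\ vvalid R c /\
          t = tprod3 P Q R a b c).

(* kernel of T(V) (x)_K T(W) -> (T(V)/I_P) (x)_K (T(W)/I_Q) *)
Definition ker2 (P Q : pres) : vec2 -> Prop :=
  span (fun t => exists a b,
          ((ideal P a /\ vvalid Q b) \/ (vvalid P a /\ ideal Q b)) /\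
          t = tprod P Q a b).

Definition zeta (x : vec2) : vec2 := lin zetab x.

Definition mul_l (t : (word * word) * word) : word * word :=
  let: ((x, y), z) := t in (wcat x y, z).
Definition mul_r (t : (word * word) * word) : word * word :=
  let: ((x, y), z) := t in (x, wcat y z).
Definition zeta_l (t : (word * word) * word) : (word * word) * word :=
  let: ((x, y), z) := t in (zetab (x, y), z).
Definition zeta_r (t : (word * word) * word) : (word * word) * word :=
  let: ((x, y), z) := t in let: (y', z') := zetab (y, z) in ((x, y'), z').

(* zeta descends to a map (T(partial)/I_B) (x) (T(chi)/I_A) ->           *)
(* (T(chi)/I_A) (x) (T(partial)/I_B) which is a distributive law; the   *)
(* induced maps on quotients are described through representatives,     *)
(* equalities in the quotient A (x) B being congruences mod ker2 A B.   *)
Definition descends (B A : pres) : Prop :=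
  (forall x : vec2, ker2 B A x -> ker2 A B (zeta x)) /\
  (forall x : vec3, tens3 B B A x ->
     ker2 A B (zeta (lin mul_l x) - lin mul_r (lin zeta_l (lin zeta_r x)))) /\
  (forall x : vec3, tens3 B A A x ->
     ker2 A B (zeta (lin mul_r x) - lin mul_l (lin zeta_r (lin zeta_l x)))) /\
  (forall b : vec, vvalid B b ->
     ker2 A B (zeta (lin (fun x : word => (x, (x.1, [::]) : word)) b)
               - lin (fun x : word => ((ptgt B x, [::]) : word, x)) b)) /\
  (forall a : vec, vvalid A a ->
     ker2 A B (zeta (lin (fun y : word => ((ptgt A y, [::]) : word, y)) a)
               - lin (fun y : word => (y, (y.1, [::]) : word)) a)).

End Lin.

(* Pushing a coface ∂_i past a χ-word doubles the strand in position i, so it turns each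
   braid relation (and χ_i χ_i = 1) into a consequence of the same relations on one more
   strand; pushing the two sides of a relation ∂_x ∂_y = ∂_{y+1} ∂_x past a letter χ_k gives
   equivalent χ-words and the two sides of another such relation (or equal words).  Hence ζ
   maps the kernel of T(∂) ⊗ T(χ) → Mag ⊗ Braid (and of its three variants) into the kernel
   of T(χ) ⊗ T(∂) → Braid ⊗ Mag.  The multiplicativity and unit axioms of a distributive law
   already hold for ζ on words, since ζ is defined by successive application. *)

From HB Require Import structures.
From mathcomp Require Import all_boot all_order all_algebra.
From mathcomp Require Import finmap zify.
From mathcomp.multinomials Require Import monalg.
Set Implicit Arguments. Unset Strict Implicit. Unset Printing Implicit Defensive.
Import GRing.Theory.

(** * Pushing cofaces past χ-words *)

Notation cword n t := (all (fun x => x < n) t).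

Variant zeta1_spec (i j : nat) : seq nat * nat -> Type :=
| Zeta1Lt of i < j : zeta1_spec i j ([:: j.+1], i)
| Zeta1Eq of i = j : zeta1_spec i j ([:: j.+1; j], j.+1)
| Zeta1Succ of i = j.+1 : zeta1_spec i j ([:: j; j.+1], j)
| Zeta1Gt of j.+1 < i : zeta1_spec i j ([:: j], i).

Lemma zeta1P i j : zeta1_spec i j (zeta1 i j).
Proof.
rewrite /zeta1; case: ltnP => [|ge_ij]; first exact: Zeta1Lt.
case: eqP => [->|ne_ij]; first exact: Zeta1Eq.
case: eqP => [->|ne_iSj]; first exact: Zeta1Succ.
apply: Zeta1Gt; lia.
Qed.

Lemma zetaL_cat i a c :
  zetaL i (a ++ c) = ((zetaL i a).1 ++ (zetaL (zetaL i a).2 c).1,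
                      (zetaL (zetaL i a).2 c).2).
Proof.
elim: a i => [|j a IHa] i /=; first by case: zetaL.
case: zeta1 => u i1; rewrite IHa; case: (zetaL i1 a) => u1 i2 /=.
by case: zetaL => u2 i3 /=; rewrite catA.
Qed.

Lemma zetaR_catl a c t :
  zetaR (a ++ c) t = ((zetaR c (zetaR a t).1).1,
                      (zetaR c (zetaR a t).1).2 ++ (zetaR a t).2).
Proof.
elim: a t => [|i a IHa] t /=; first by case: zetaR => ? ?; rewrite cats0.
case: zetaL => u i1; rewrite IHa; case: (zetaR a u) => t1 s1 /=.
by case: zetaR => t2 s2 /=; rewrite rcons_cat.
Qed.

Lemma zetaR_catr rs a c :
  zetaR rs (a ++ c) = ((zetaR rs a).1 ++ (zetaR (rev (zetaR rs a).2) c).1,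
                       (zetaR (rev (zetaR rs a).2) c).2).
Proof.
elim: rs a c => [|i rs IHrs] a c //=.
rewrite zetaL_cat; case: (zetaL i a) => u1 i1 /=.
rewrite IHrs; case: (zetaR rs u1) => t1 s1 /=.
rewrite rev_rcons /=; case: (zetaL i1 c) => u2 i2 /=.
by case: (zetaR (rev s1) u2).
Qed.

Lemma zetaR_nil rs : zetaR rs [::] = ([::], rev rs).
Proof. by elim: rs => [|i rs IHrs] //=; rewrite IHrs rev_cons. Qed.

Lemma size_zetaR rs t : size (zetaR rs t).2 = size rs.
Proof.
elim: rs t => [|i rs IHrs] t //=; case: zetaL => u i1; have := IHrs u.
by case: zetaR => t1 s1 /= <-; rewrite size_rcons.
Qed.

Lemma dvalid_s_cat m a c :
  dvalid_s m (a ++ c) = dvalid_s (m + size c) a && dvalid_s m c.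
Proof.
elim: a => [|j a IHa] //=; rewrite IHa andbA size_cat.
by congr (_ && _ && _); rewrite addnAC addnA.
Qed.

Lemma dvalid_s_rcons m s i : dvalid_s m (rcons s i) = (i <= m) && dvalid_s m.+1 s.
Proof. by rewrite -cats1 dvalid_s_cat /= addn1 addn0 andbT andbC. Qed.

Lemma zetaL_valid n i t : i <= n -> cword n t ->
  cword n.+1 (zetaL i t).1 /\ (zetaL i t).2 <= n.
Proof.
elim: t i => [|j t IHt] i le_in //= /andP[lt_jn t_n].
case: zeta1P => hij;
  [have := IHt i | have := IHt j.+1 | have := IHt j | have := IHt i];
  case: zetaL => u i1 /= /(_ ltac:(lia) t_n) [u_n le_i1n];
  rewrite /= u_n ?andbT; split => //; lia.
Qed.

Lemma zetaR_valid m s t : dvalid_s m s -> cword m t ->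
  [/\ cword (m + size s) (zetaR (rev s) t).1, dvalid_s m (zetaR (rev s) t).2
    & size (zetaR (rev s) t).2 = size s].
Proof.
elim/last_ind: s m t => [|s i IHs] m t /=; first by rewrite addn0.
rewrite rev_rcons dvalid_s_rcons => /andP[le_im s_m] t_m /=.
have := zetaL_valid le_im t_m; case: zetaL => u i1 /= [u_m le_i1m].
have := IHs _ _ s_m u_m; case: zetaR => t1 s1 /= [t1_m s1_m size_s1].
by rewrite dvalid_s_rcons !size_rcons le_i1m s1_m size_s1 -addSnnS; split.
Qed.

Lemma zetabE m s n t : zetab ((m, s), (n, t)) =
  ((m + size s, (zetaR (rev s) t).1), (m, (zetaR (rev s) t).2)).
Proof. by rewrite /zetab; case: zetaR. Qed.

Lemma zetab_mul_l x y z : x.1 = dtgt y ->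
  zetab (mul_l ((x, y), z)) = mul_r (zeta_l (zeta_r ((x, y), z))).
Proof.
case: x y z => [xm xs] [ym ys] [zm zs]; rewrite /dtgt /= => ->.
rewrite rev_cat zetaR_catl; case: (zetaR (rev ys) zs) => t1 s1 /=.
case: (zetaR (rev xs) t1) => t2 s2 /=.
by rewrite !natrDE size_cat [(size xs + _)%N]addnC addnA.
Qed.

Lemma zetab_mul_r x y z :
  zetab (mul_r ((x, y), z)) = mul_l (zeta_r (zeta_l ((x, y), z))).
Proof.
case: x y z => [xm xs] [ym ys] [zm zs] /=.
rewrite zetaR_catr; have := size_zetaR (rev xs) ys.
case: (zetaR (rev xs) ys) => t1 s1 /= sz_s1.
by case: (zetaR (rev s1) zs) => t2 s2; rewrite /wcat /= sz_s1 size_rev.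
Qed.

(** * Braid and symmetric congruences *)

Inductive cmove (sym : bool) (n : nat) : seq nat -> seq nat -> Prop :=
| CmoveComm x y of x < n & y < n & (x.+2 <= y) || (y.+2 <= x) :
    cmove sym n [:: x; y] [:: y; x]
| CmoveBraid x of x.+1 < n : cmove sym n [:: x; x.+1; x] [:: x.+1; x; x.+1]
| CmoveCancel x of sym & x < n : cmove sym n [:: x; x] [::].

Inductive ceqv (sym : bool) (n : nat) : seq nat -> seq nat -> Prop :=
| ceqv_refl t : ceqv sym n t t
| ceqv_move a c r r' : cword n a -> cword n c -> cmove sym n r r' ->
    ceqv sym n (a ++ r ++ c) (a ++ r' ++ c)
| ceqv_sym t t' : ceqv sym n t t' -> ceqv sym n t' t
| ceqv_trans t t' t'' : ceqv sym n t t' -> ceqv sym n t' t'' -> ceqv sym n t t''.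

Lemma cmove_cword sym n r r' : cmove sym n r r' -> cword n r && cword n r'.
Proof. by case=> [x y|x|x _] /= *; rewrite ?andbT; repeat (apply/andP; split); lia. Qed.

Lemma ceqv_ctx sym n l r t t' : ceqv sym n t t' -> cword n l -> cword n r ->
  ceqv sym n (l ++ t ++ r) (l ++ t' ++ r).
Proof.
move=> eqv_t l_n r_n.
elim: eqv_t => {t t'} [t|a c q q' a_n c_n mv|t t' _ IH|t t' t'' _ IH1 _ IH2].
- exact: ceqv_refl.
- have catE s : l ++ (a ++ s ++ c) ++ r = (l ++ a) ++ s ++ (c ++ r) by rewrite !catA.
  by rewrite !catE; apply: ceqv_move; rewrite // all_cat ?l_n ?a_n ?c_n ?r_n.
- exact: ceqv_sym IH.
- exact: ceqv_trans IH1 IH2.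
Qed.

Lemma ceqv_cat sym n x x' y y' : ceqv sym n x x' -> ceqv sym n y y' ->
  cword n x' -> cword n y -> ceqv sym n (x ++ y) (x' ++ y').
Proof.
move=> eqv_x eqv_y x'_n y_n; apply: (@ceqv_trans _ _ _ (x' ++ y)).
  exact: (ceqv_ctx (l := [::]) eqv_x).
by have := ceqv_ctx (r := [::]) eqv_y x'_n; rewrite !cats0; apply.
Qed.

Lemma ceqv1 sym n r r' : cmove sym n r r' -> ceqv sym n r r'.
Proof.
by move=> mv; have := ceqv_move (a := [::]) (c := [::]) isT isT mv; rewrite !cats0; apply.
Qed.

Lemma ceqv_weaken sym n t t' : ceqv false n t t' -> ceqv sym n t t'.
Proof.
elim=> {t t'} [t|a c r r' a_n c_n mv|t t' _ IH|t t' t'' _ IH1 _ IH2].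
- exact: ceqv_refl.
- by apply: ceqv_move => //; case: mv => [x y|x|x //]; [apply: CmoveComm|apply: CmoveBraid].
- exact: ceqv_sym IH.
- exact: ceqv_trans IH1 IH2.
Qed.

Lemma take_drop_nth2 k (w : seq nat) : k.+1 < size w ->
  w = take k w ++ [:: nth 0 w k; nth 0 w k.+1] ++ drop k.+2 w.
Proof.
move=> lt_k; rewrite -{1}(cat_take_drop k w) (drop_nth 0) ?(ltnW lt_k) //.
by rewrite (drop_nth 0).
Qed.

Lemma take_drop_nth3 k (w : seq nat) : k.+2 < size w ->
  w = take k w ++ [:: nth 0 w k; nth 0 w k.+1; nth 0 w k.+2] ++ drop k.+3 w.
Proof.
move=> lt_k; rewrite -{1}(cat_take_drop k w) (drop_nth 0) ?(ltnW (ltnW lt_k)) //.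
by rewrite (drop_nth 0) ?(ltnW lt_k) // (drop_nth 0).
Qed.

Lemma ceqv_in_ctx sym n a c r r' t : cword n (a ++ r ++ c) -> ceqv sym n r r' ->
  ceqv sym n (a ++ r' ++ c) t -> ceqv sym n (a ++ r ++ c) t.
Proof. by rewrite !all_cat => /and3P[a_n _ c_n] /ceqv_ctx/(_ a_n c_n); apply: ceqv_trans. Qed.

Lemma ceqv_comm_at sym n k w t : cword n w -> k.+1 < size w ->
  (nth 0 w k).+2 <= nth 0 w k.+1 \/ (nth 0 w k.+1).+2 <= nth 0 w k ->
  ceqv sym n (take k w ++ [:: nth 0 w k.+1; nth 0 w k] ++ drop k.+2 w) t ->
  ceqv sym n w t.
Proof.
move=> w_n lt_k; move: (take_drop_nth2 lt_k) w_n.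
move: (take k w) (nth 0 w k) (nth 0 w k.+1) (drop k.+2 w) => a x y c -> w_n far.
apply: ceqv_in_ctx => //; move: w_n; rewrite !all_cat /= => /and3P[_ /and3P[x_n y_n _] _].
by apply/ceqv1/CmoveComm => //; apply/orP.
Qed.

Lemma ceqv_braid_at sym n k w t : cword n w -> k.+2 < size w ->
  nth 0 w k = nth 0 w k.+2 ->
  nth 0 w k.+1 = (nth 0 w k).+1 \/ nth 0 w k = (nth 0 w k.+1).+1 ->
  ceqv sym n (take k w ++ [:: nth 0 w k.+1; nth 0 w k; nth 0 w k.+1] ++ drop k.+3 w) t ->
  ceqv sym n w t.
Proof.
move=> w_n lt_k; move: (take_drop_nth3 lt_k) w_n.
move: (take k w) (nth 0 w k) (nth 0 w k.+1) (nth 0 w k.+2) (drop k.+3 w).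
move=> a x y z c -> w_n eq_xz adj; subst z; apply: ceqv_in_ctx => //.
move: w_n; rewrite !all_cat /= => /and3P[_ /and4P[x_n y_n _ _] _].
case: adj => [eq_y|eq_x]; [subst y | subst x].
  exact/ceqv1/CmoveBraid.
exact/ceqv_sym/ceqv1/CmoveBraid.
Qed.

Lemma ceqv_cancel_at (sym : bool) n k w t : sym -> cword n w -> k.+1 < size w ->
  nth 0 w k = nth 0 w k.+1 -> ceqv sym n (take k w ++ drop k.+2 w) t -> ceqv sym n w t.
Proof.
move=> symT w_n lt_k; move: (take_drop_nth2 lt_k) w_n.
move: (take k w) (nth 0 w k) (nth 0 w k.+1) (drop k.+2 w) => a x y c -> w_n eq_xy.
subst y; apply: (ceqv_in_ctx (r' := [::])) => //.
by move: w_n; rewrite !all_cat /= => /and3P[_ /andP[x_n _] _]; apply/ceqv1/CmoveCancel.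
Qed.

Ltac seq_eq := repeat (first [reflexivity | f_equal]); lia.
Ltac cword_lia := rewrite /= ?andbT; repeat (apply/andP; split); lia.

Ltac zeta1_cases := repeat match goal with |- context [zeta1 ?i ?j] =>
  case: (zeta1P i j) => ? /=; try (exfalso; lia) end.

(* [chi_searchN] proves [ceqv] between explicit words by a backtracking search for a chain
   of at most N elementary moves. *)
Ltac chi_close := match goal with |- ceqv _ _ ?t ?t' =>
  replace t' with t by seq_eq; exact: ceqv_refl end.
Ltac chi_step_at k :=
  (apply: (ceqv_comm_at (k := k)); [cword_lia | done | simpl; lia | simpl])
  + (apply: (ceqv_braid_at (k := k)); [cword_lia | done | simpl; lia | simpl; lia | simpl])
  + (apply: (ceqv_cancel_at (k := k)); [done | cword_lia | done | simpl; lia | simpl]).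
Ltac chi_step := chi_step_at 0 + chi_step_at 1 + chi_step_at 2 + chi_step_at 3 + chi_step_at 4.
Ltac chi_search1 := chi_close + (chi_step; chi_close).
Ltac chi_search2 := chi_search1 + (chi_step; chi_search1).
Ltac chi_search3 := chi_search2 + (chi_step; chi_search2).
Ltac chi_search4 := chi_search3 + (chi_step; chi_search3).

(* By [zeta1], pushing ∂_i past χ_j replaces the crossing χ_j by the crossings of the doubled
   strand i, so each elementary move becomes a short chain of moves. *)
Lemma zetaL_cmove sym n i r r' : i <= n -> cmove sym n r r' ->
  (zetaL i r).2 = (zetaL i r').2 /\ ceqv sym n.+1 (zetaL i r).1 (zetaL i r').1.
Proof.
move=> le_in [x y x_n y_n far|x x_n|x symT x_n] /=; zeta1_cases;
  (split; [lia | once chi_search4]).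
Qed.

Lemma zetaL_ceqv sym n i t t' : i <= n -> ceqv sym n t t' ->
  (zetaL i t).2 = (zetaL i t').2 /\ ceqv sym n.+1 (zetaL i t).1 (zetaL i t').1.
Proof.
move=> le_in eqv_t; elim: eqv_t i le_in => {t t'}
  [t|a c r r' a_n c_n mv|t t' _ IH|t t' t'' _ IH1 _ IH2] i le_in.
- by split=> //; apply: ceqv_refl.
- rewrite !zetaL_cat.
  have /andP[r_n _] := cmove_cword mv.
  have [u_n le_i1n] := zetaL_valid le_in a_n.
  have [eq_i2 eqv_r] := zetaL_cmove le_i1n mv.
  have [_ le_i2n] := zetaL_valid le_i1n r_n.
  have [c1_n _] := zetaL_valid le_i2n c_n.
  by rewrite /= -eq_i2; split=> //; apply: ceqv_ctx.
- by have [eq_i eqv] := IH i le_in; split=> //; apply: ceqv_sym.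
- have [eq_i1 eqv1] := IH1 i le_in; have [eq_i2 eqv2] := IH2 i le_in.
  by split; [rewrite eq_i1 | apply: ceqv_trans eqv2].
Qed.

Lemma zetaR_ceqv sym m s t t' : dvalid_s m s -> ceqv sym m t t' ->
  (zetaR (rev s) t).2 = (zetaR (rev s) t').2 /\
  ceqv sym (m + size s) (zetaR (rev s) t).1 (zetaR (rev s) t').1.
Proof.
elim/last_ind: s m t t' => [|s i IHs] m t t' /=; first by rewrite addn0.
rewrite rev_rcons dvalid_s_rcons size_rcons => /andP[le_im s_m] /(zetaL_ceqv le_im) /=.
case: (zetaL i t) (zetaL i t') => u i1 [u' i1'] /= [<- /(IHs _ _ _ s_m)].
case: (zetaR (rev s) u) (zetaR (rev s) u') => t1 s1 [t1' s1'] /= [<- eqv].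
by rewrite -addSnnS.
Qed.

(** * Cosimplicial congruences *)

Inductive dmove (simp : bool) (N : nat) : seq nat -> seq nat -> Prop :=
| Dmove x y of (if simp then x <= y else x < y) & y <= N :
    dmove simp N [:: x; y] [:: y.+1; x].

Inductive deqv (simp : bool) (m : nat) : seq nat -> seq nat -> Prop :=
| deqv_refl s : deqv simp m s s
| deqv_move a c p q : dvalid_s m c -> dvalid_s (m + size c).+2 a ->
    dmove simp (m + size c) p q -> deqv simp m (a ++ p ++ c) (a ++ q ++ c)
| deqv_sym s s' : deqv simp m s s' -> deqv simp m s' s
| deqv_trans s s' s'' : deqv simp m s s' -> deqv simp m s' s'' -> deqv simp m s s''.

Lemma dmove_size simp N p q : dmove simp N p q -> size p = 2 /\ size q = 2.
Proof. by case. Qed.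

Lemma dmove_dvalid simp N p q : dmove simp N p q -> dvalid_s N p && dvalid_s N q.
Proof. by case=> x y; case: simp => /= lt_xy le_yN; rewrite !addn0; cword_lia. Qed.

Lemma deqv1 simp N p q : dmove simp N p q -> deqv simp N p q.
Proof.
move=> mv; have := @deqv_move simp N [::] [::] p q isT isT.
by rewrite addn0 !cats0; apply.
Qed.

Lemma deqv_size simp m s s' : deqv simp m s s' -> size s = size s'.
Proof.
elim=> {s s'} [//|a c p q _ _ /dmove_size[sz_p sz_q]|s s' _ ->|s s' s'' _ -> _ ->] //.
by rewrite !size_cat sz_p sz_q.
Qed.

Lemma deqv_ctx simp N m x y a c : deqv simp N x y -> dvalid_s m c -> N = m + size c ->
  dvalid_s (N + size x) a -> deqv simp m (a ++ x ++ c) (a ++ y ++ c).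
Proof.
move=> eqv_xy c_m def_N; elim: eqv_xy a => {x y}
  [s|a0 c0 p q c0_N a0_N mv|s s' eqv IH|s s' s'' eqv1 IH1 _ IH2] a a_N.
- exact: deqv_refl.
- have catE r : a ++ (a0 ++ r ++ c0) ++ c = (a ++ a0) ++ r ++ (c0 ++ c) by rewrite !catA.
  have [sz_p _] := dmove_size mv.
  have def_m : m + size (c0 ++ c) = N + size c0 by rewrite size_cat def_N; lia.
  rewrite !catE; apply: deqv_move; rewrite ?def_m //.
    by rewrite dvalid_s_cat c_m -def_N c0_N.
  rewrite dvalid_s_cat a0_N andbT.
  by move: a_N; rewrite !size_cat sz_p; congr (dvalid_s _ _); lia.
- by apply/deqv_sym/IH; rewrite (deqv_size eqv).
- by apply: deqv_trans (IH1 a a_N) (IH2 a _); rewrite -(deqv_size eqv1).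
Qed.

Ltac dmove_close := match goal with |- dmove _ _ [:: ?x; ?y] ?q =>
  replace q with [:: y.+1; x] by seq_eq; apply: Dmove; lia end.

Lemma zetaR_dmove_letter simp N p q k : dmove simp N p q -> k < N ->
  ceqv false N.+2 (zetaR (rev p) [:: k]).1 (zetaR (rev q) [:: k]).1 /\
  let p' := (zetaR (rev p) [:: k]).2 in let q' := (zetaR (rev q) [:: k]).2 in
  [\/ p' = q', dmove simp N p' q' | dmove simp N q' p'].
Proof.
case=> x y + le_yN lt_kN; case: simp => lt_xy /=; zeta1_cases;
  (split; [once chi_search1 | first [apply: Or31; seq_eq
                                    | apply: Or32; dmove_close | apply: Or33; dmove_close]]).
Qed.

Lemma zetaR_dmove simp N p q t : dmove simp N p q -> cword N t ->
  ceqv false N.+2 (zetaR (rev p) t).1 (zetaR (rev q) t).1 /\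
  deqv simp N (zetaR (rev p) t).2 (zetaR (rev q) t).2.
Proof.
elim: t p q => [|k t IHt] p q mv.
  by rewrite !zetaR_nil !revK; split; [apply: ceqv_refl | apply: deqv1].
case/andP=> lt_kN t_N; have k_N : cword N [:: k] by rewrite /= lt_kN.
have /andP[p_N q_N] := dmove_dvalid mv; have [sz_p sz_q] := dmove_size mv.
have [] := zetaR_valid p_N k_N; have [] := zetaR_valid q_N k_N.
have [] := zetaR_dmove_letter mv lt_kN.
rewrite -[k :: t]/([:: k] ++ t) !zetaR_catr sz_p sz_q addn2.
case: (zetaR (rev p) [:: k]) (zetaR (rev q) [:: k]) => [t1 p1] [t2 q1] /=.
move=> eqv_t link t2_N q1_N sz_q1 t1_N p1_N sz_p1.
have [u1_N _ _] := zetaR_valid p1_N t_N; have [u2_N _ _] := zetaR_valid q1_N t_N.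
rewrite sz_p1 addn2 in u1_N; rewrite sz_q1 addn2 in u2_N.
case: link => [<-|/IHt/(_ t_N)[eqv_u eqv_s]|/IHt/(_ t_N)[eqv_u eqv_s]].
- by split; [apply: ceqv_cat => //; apply: ceqv_refl | apply: deqv_refl].
- by split=> //; apply: ceqv_cat.
- by split; [apply: ceqv_cat => //; apply: ceqv_sym | apply: deqv_sym].
Qed.

Lemma zetaR_deqv sym simp m s s' t : deqv simp m s s' -> cword m t ->
  ceqv sym (m + size s) (zetaR (rev s) t).1 (zetaR (rev s') t).1 /\
  deqv simp m (zetaR (rev s) t).2 (zetaR (rev s') t).2.
Proof.
move=> eqv_s t_m; elim: eqv_s => {s s'}
  [s|a c p q c_m a_m mv|s s' eqv [IH1 IH2]|s s' s'' eqv1 [IH1 IH2] _ [IH3 IH4]].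
- by split; [apply: ceqv_refl | apply: deqv_refl].
- rewrite !rev_cat !zetaR_catl.
  have [u_m v_m sz_v] := zetaR_valid c_m t_m.
  have [eqv_u eqv_v] := zetaR_dmove mv u_m.
  have [eq_w eqv_w] := zetaR_ceqv a_m eqv_u.
  have [sz_p _] := dmove_size mv; have /andP[p_m _] := dmove_dvalid mv.
  have [w_m _ _] := zetaR_valid p_m u_m; rewrite sz_p addn2 in w_m.
  have [_ x_m _] := zetaR_valid a_m w_m.
  split.
    by apply: ceqv_weaken; move: eqv_w; rewrite !size_cat sz_p; congr ceqv; lia.
  rewrite /= -eq_w; apply: deqv_ctx eqv_v v_m _ _; first by rewrite sz_v.
  by rewrite size_zetaR size_rev sz_p addn2.
- by rewrite -(deqv_size eqv); split; [apply: ceqv_sym | apply: deqv_sym].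
- split; last exact: deqv_trans IH4.
  by apply: ceqv_trans IH1 _; rewrite (deqv_size eqv1).
Qed.

(** * Spans and linear maps on free modules *)

Section Span.
Variables (k : fieldType) (V : lmodType k) (S : V -> Prop).
Local Open Scope ring_scope.

Lemma span_gen v : S v -> span S v.
Proof. by move=> Sv; have := spanS 1 Sv (span0 S); rewrite scale1r addr0. Qed.

Lemma spanD u v : span S u -> span S v -> span S (u + v).
Proof.
elim=> [|c s u' Ss _ IH] Sv; first by rewrite add0r.
by rewrite -addrA; apply: spanS => //; apply: IH.
Qed.

Lemma spanZ c u : span S u -> span S (c *: u).
Proof.
elim=> [|d s u' Ss _ IH]; first by rewrite scaler0; apply: span0.
by rewrite scalerDr scalerA; apply: spanS.
Qed.

Lemma spanN u : span S u -> span S (- u).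
Proof. by rewrite -scaleN1r; apply: spanZ. Qed.

End Span.

Section LinearMap.
Variables (k : fieldType) (U V : lmodType k) (f : U -> V).
Local Open Scope ring_scope.
Hypothesis f_lin : linear f.
Let F : {linear U -> V} := HB.pack f (GRing.isLinear.Build k U V *:%R f f_lin).

Lemma linear_map0 : f 0 = 0. Proof. exact: (linear0 F). Qed.
Lemma linear_mapB : {morph f : u v / u - v}. Proof. exact: (linearB F). Qed.
Lemma linear_mapZ c : {morph f : v / c *: v}. Proof. exact: (linearZ_LR F). Qed.
Lemma linear_map_sum (I : Type) (r : seq I) (G : I -> U) :
  f (\sum_(i <- r) G i) = \sum_(i <- r) f (G i).
Proof. exact: (linear_sum F). Qed.

Lemma linear_comp (W : lmodType k) (g : V -> W) : linear g -> linear (g \o f).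
Proof. by move=> g_lin c u v /=; rewrite f_lin g_lin. Qed.

Lemma span_linear_map (S : U -> Prop) (T : V -> Prop) u :
  (forall s, S s -> span T (f s)) -> span S u -> span T (f u).
Proof.
move=> ST; elim=> [|c s v Ss _ IH]; first by rewrite linear_map0; apply: span0.
by rewrite f_lin; apply: spanD => //; apply/spanZ/ST.
Qed.

End LinearMap.

Section FreeModules.
Variable k : fieldType.
Local Open Scope ring_scope.
Implicit Types X Y Z : choiceType.

Lemma monalgUZ X (c a : k) (z : X) : << c * a *g z >> = c *: << a *g z >>.
Proof. by apply/malgP => w; rewrite mcoeffZ !mcoeffU mulrnAr. Qed.

Lemma linear_malgE X (W : lmodType k) (f : {malg k[X]} -> W) p : linear f ->
  f p = \sum_(x <- msupp p) p@_x *: f << x >>.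
Proof.
move=> f_lin; rewrite {1}(monalgE p) linear_map_sum //; apply: eq_bigr => x _.
by rewrite -(mulr1 p@_x) monalgUZ linear_mapZ // mulr1.
Qed.

Lemma span_linear_malg X (W : lmodType k) (f : {malg k[X]} -> W) (T : W -> Prop) p :
  linear f -> (forall x, x \in msupp p -> span T (f << x >>)) -> span T (f p).
Proof.
move=> f_lin Tf; rewrite linear_malgE // big_seq.
elim/big_rec: _ => [|x v x_p Tv]; first exact: span0.
by apply: spanD Tv; apply/spanZ/Tf.
Qed.

Lemma msupp_linear_comb X (c : k) (p q : {malg k[X]}) :
  (msupp (c *: p + q) `<=` msupp p `|` msupp q)%fset.
Proof. by apply: fsubset_trans (msuppD_le _ _) _; apply/fsetSU/msuppZ_le. Qed.

Lemma lin_sub X Y (f : X -> Y) (p : {malg k[X]}) (d : {fset X}) :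
  (msupp p `<=` d)%fset -> lin f p = \sum_(x <- d) << p@_x *g f x >>.
Proof.
move=> le_pd; rewrite /lin (big_fset_incl _ le_pd) // => x _ /mcoeff_outdom ->.
by rewrite monalgU0.
Qed.

Lemma linear_lin X Y (f : X -> Y) : linear (lin (k := k) f).
Proof.
move=> c p q; rewrite (lin_sub _ (msupp_linear_comb c p q)).
rewrite (lin_sub _ (fsubsetUl (msupp p) (msupp q))).
rewrite (lin_sub _ (fsubsetUr (msupp p) (msupp q))) scaler_sumr -big_split /=.
by apply: eq_bigr => x _; rewrite mcoeffD mcoeffZ monalgUD monalgUZ.
Qed.

Lemma linU X Y (f : X -> Y) x : lin (k := k) f << x >> = << f x >>.
Proof. by rewrite /lin msuppU oner_eq0 big_seq_fset1 mcoeffUU. Qed.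

Lemma lin_comp X Y Z (f : Y -> Z) (g : X -> Y) p :
  lin (k := k) f (lin g p) = lin (f \o g) p.
Proof.
rewrite -[LHS]/((lin f \o lin g) p) (linear_malgE _ (linear_comp (linear_lin g) (linear_lin f))).
by rewrite (linear_malgE _ (linear_lin _)); apply: eq_bigr => x _ /=; rewrite !linU.
Qed.

Lemma eq_in_lin X Y (f g : X -> Y) p :
  {in msupp p, f =1 g} -> lin (k := k) f p = lin g p.
Proof. by move=> eq_fg; rewrite /lin !big_seq; apply: eq_bigr => x /eq_fg ->. Qed.

Lemma bil_sub X Y Z (f : X -> Y -> option Z) p q (d1 : {fset X}) (d2 : {fset Y}) :
  (msupp p `<=` d1)%fset -> (msupp q `<=` d2)%fset ->
  bil (k := k) f p q = \sum_(x <- d1) \sum_(y <- d2)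
                         oapp (fun z => << p@_x * q@_y *g z >>) 0 (f x y).
Proof.
move=> le_p le_q; rewrite /bil (big_fset_incl _ le_p) => [|x _ /mcoeff_outdom ->].
  apply: eq_bigr => x _; rewrite (big_fset_incl _ le_q) // => y _ /mcoeff_outdom ->.
  by case: (f x y) => //= z; rewrite mulr0 monalgU0.
by apply: big1 => y _; case: (f x y) => //= z; rewrite mul0r monalgU0.
Qed.

Lemma bil_linearl X Y Z (f : X -> Y -> option Z) q :
  linear (fun p => bil (k := k) f p q).
Proof.
move=> c p p' /=; rewrite (bil_sub _ (msupp_linear_comb c p p') (fsubset_refl _)).
rewrite (bil_sub _ (fsubsetUl (msupp p) (msupp p')) (fsubset_refl _)).
rewrite (bil_sub _ (fsubsetUr (msupp p) (msupp p')) (fsubset_refl _)).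
rewrite scaler_sumr -big_split; apply: eq_bigr => x _ /=.
rewrite scaler_sumr -big_split; apply: eq_bigr => y _ /=.
case: (f x y) => [z|] /=; last by rewrite scaler0 addr0.
by rewrite mcoeffD mcoeffZ mulrDl monalgUD -mulrA monalgUZ.
Qed.

Lemma bil_linearr X Y Z (f : X -> Y -> option Z) p :
  linear (fun q => bil (k := k) f p q).
Proof.
move=> c q q' /=; rewrite (bil_sub _ (fsubset_refl _) (msupp_linear_comb c q q')).
rewrite (bil_sub _ (fsubset_refl _) (fsubsetUl (msupp q) (msupp q'))).
rewrite (bil_sub _ (fsubset_refl _) (fsubsetUr (msupp q) (msupp q'))).
rewrite scaler_sumr -big_split; apply: eq_bigr => x _ /=.
rewrite scaler_sumr -big_split; apply: eq_bigr => y _ /=.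
case: (f x y) => [z|] /=; last by rewrite scaler0 addr0.
rewrite mcoeffD mcoeffZ mulrDr monalgUD; congr (_ + _).
by rewrite mulrCA; apply: monalgUZ.
Qed.

Lemma bilUU X Y Z (f : X -> Y -> option Z) x y :
  bil (k := k) f << x >> << y >> = oapp (fun z => << z >>) 0 (f x y).
Proof. by rewrite /bil !msuppU oner_eq0 !big_seq_fset1 !mcoeffUU mulr1. Qed.

Lemma msupp_sum X (I : eqType) (r : seq I) (G : I -> {malg k[X]}) z :
  z \in msupp (\sum_(i <- r) G i) -> exists2 i, i \in r & z \in msupp (G i).
Proof.
elim: r => [|i r IHr]; first by rewrite big_nil msupp0 inE.
rewrite big_cons => /(fsubsetP (msuppD_le _ _)); rewrite inE => /orP[z_i|/IHr[j j_r z_j]].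
  by exists i; rewrite ?mem_head.
by exists j; rewrite // inE j_r orbT.
Qed.

Lemma msupp_bil X Y Z (f : X -> Y -> option Z) p q z :
  z \in msupp (bil (k := k) f p q) ->
  exists x y, [/\ x \in msupp p, y \in msupp q & f x y = Some z].
Proof.
move=> /msupp_sum[x x_p] /msupp_sum[y y_q].
case f_xy: (f x y) => [z'|] /=; last by rewrite msupp0 inE.
by move/(fsubsetP msuppU_le); rewrite inE => /eqP ->; exists x, y.
Qed.

Lemma span_msupp X (S : {malg k[X]} -> Prop) (P : X -> Prop) v :
  (forall s, S s -> forall z, z \in msupp s -> P z) ->
  span S v -> forall z, z \in msupp v -> P z.
Proof.
move=> SP; elim=> [|c s v' Ss _ IH] z; first by rewrite msupp0 inE.
move=> /(fsubsetP (msupp_linear_comb c s v')); rewrite inE => /orP[]; last exact: IH.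
exact: SP.
Qed.

End FreeModules.

(** * The distributive law *)

Definition cpres (sym : bool) := if sym then Sym else Braid.
Definition dpres (simp : bool) := if simp then Simp else Mag.

Lemma pvalid_cpres sym : pvalid (cpres sym) = cvalid. Proof. by case: sym. Qed.
Lemma ptgt_cpres sym : ptgt (cpres sym) = ctgt. Proof. by case: sym. Qed.
Lemma pvalid_dpres simp : pvalid (dpres simp) = dvalid. Proof. by case: simp. Qed.
Lemma ptgt_dpres simp : ptgt (dpres simp) = dtgt. Proof. by case: simp. Qed.

Lemma prel_cpres sym p q : prel (cpres sym) p q -> p.1 = q.1 /\ cmove sym p.1 p.2 q.2.
Proof.
have braid_cmove p' q' : braid_rel p' q' -> p'.1 = q'.1 /\ cmove sym p'.1 p'.2 q'.2.
  case=> [[n [i [j [lt_in [lt_jn [far [-> ->]]]]]]]|[n [i [lt_in [-> ->]]]]].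
    by split=> //; apply: CmoveComm => //; lia.
  by split=> //; apply: CmoveBraid.
case: sym braid_cmove => /= braid_cmove; last exact: braid_cmove.
case=> [/braid_cmove //|[n [i [lt_in [-> ->]]]]].
by split=> //; apply: CmoveCancel.
Qed.

Lemma cmove_prel sym n r r' : cmove sym n r r' -> prel (cpres sym) (n, r) (n, r').
Proof.
have braid_or_sym p q : braid_rel p q -> prel (cpres sym) p q by case: sym => //= ?; left.
case=> [x y lt_xn lt_yn far|x lt_xn|x symT lt_xn]; last by rewrite symT; right; exists n, x.
  by apply/braid_or_sym; left; exists n, x, y; do !split => //; lia.
by apply/braid_or_sym; right; exists n, x.
Qed.

Lemma prel_dpres simp p q : prel (dpres simp) p q -> p.1 = q.1 /\ dmove simp p.1 p.2 q.2.
Proof.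
by case: simp => -[n [i [j [/andP[le_ij le_jn] [-> ->]]]]]; split=> //; apply: Dmove.
Qed.

Lemma dmove_prel simp N s s' : dmove simp N s s' -> prel (dpres simp) (N, s) (N, s').
Proof.
by case=> x y lt_xy le_yN; case: simp lt_xy => /= lt_xy; exists N, x, y; rewrite lt_xy le_yN.
Qed.

Section PresentedProducts.
Variable k : fieldType.
Local Open Scope ring_scope.
Implicit Types P Q : pres.

Lemma amulUU P x y :
  amul (k := k) P << x >> << y >> = if x.1 == ptgt P y then << wcat x y >> else 0.
Proof. by rewrite /amul bilUU; case: ifP. Qed.

Lemma tprodUU P Q x y :
  tprod (k := k) P Q << x >> << y >> = if x.1 == ptgt Q y then << (x, y) >> else 0.
Proof. by rewrite /tprod bilUU; case: ifP. Qed.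

Lemma amul_linearl P b : linear (fun a => amul (k := k) P a b).
Proof. exact: bil_linearl. Qed.
Lemma amul_linearr P a : linear (fun b => amul (k := k) P a b).
Proof. exact: bil_linearr. Qed.
Lemma tprod_linearl P Q b : linear (fun a => tprod (k := k) P Q a b).
Proof. exact: bil_linearl. Qed.
Lemma tprod_linearr P Q a : linear (fun b => tprod (k := k) P Q a b).
Proof. exact: bil_linearr. Qed.

Lemma amul_relUU P x y p q : p.1 = q.1 -> ptgt P p = ptgt P q ->
  amul (k := k) P (amul P << x >> (<< p >> - << q >>)) << y >> =
  if (x.1 == ptgt P p) && (p.1 == ptgt P y)
  then << wcat (wcat x p) y >> - << wcat (wcat x q) y >> else 0.
Proof.
move=> src_pq tgt_pq; rewrite (linear_mapB (amul_linearr _ _)) !amulUU -tgt_pq.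
case: eqP => _ /=; last by rewrite subrr (linear_map0 (amul_linearl _ _)).
rewrite (linear_mapB (amul_linearl _ _)) !amulUU [(wcat x q).1]/= -src_pq.
by case: eqP => // _; rewrite subrr.
Qed.

Lemma tprod_diffUl P Q u u' w : u.1 = u'.1 ->
  tprod (k := k) P Q (<< u >> - << u' >>) << w >> =
  if u.1 == ptgt Q w then << (u, w) >> - << (u', w) >> else 0.
Proof.
move=> src_u; rewrite (linear_mapB (tprod_linearl _ _ _)) !tprodUU -src_u.
by case: eqP => // _; rewrite subrr.
Qed.

Lemma tprod_diffUr P Q u w w' : ptgt Q w = ptgt Q w' ->
  tprod (k := k) P Q << u >> (<< w >> - << w' >>) =
  if u.1 == ptgt Q w then << (u, w) >> - << (u, w') >> else 0.
Proof.
move=> tgt_w; rewrite (linear_mapB (tprod_linearr _ _ _)) !tprodUU -tgt_w.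
by case: eqP => // _; rewrite subrr.
Qed.

Lemma vvalidU P x : pvalid P x -> vvalid (k := k) P << x >>.
Proof. by move=> Px z; rewrite msuppU oner_eq0 inE => /eqP ->. Qed.

Lemma msupp_tprod3 P Q R a b c z : z \in msupp (tprod3 (k := k) P Q R a b c) ->
  z.1.1.1 = ptgt Q z.1.2.
Proof.
case/msupp_bil=> xy [w [/msupp_bil[x [y [_ _ def_xy]]] _ def_z]].
move: def_xy def_z; case: eqP => // tgt_xy [<-].
by case: ifP => // _ [<-].
Qed.

Lemma ideal_linear_span P (W : lmodType k) (f : vec k -> W) (T : W -> Prop) a :
  linear f -> ideal P a ->
  (forall x y p q, pvalid P x -> pvalid P y -> prel P p q ->
     span T (f (amul P (amul P << x >> (<< p >> - << q >>)) << y >>))) ->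
  span T (f a).
Proof.
move=> f_lin Ia fT; apply: (span_linear_map f_lin) Ia.
move=> _ [u [v [p [q [u_P [v_P [_ [_ [pq ->]]]]]]]]].
apply: (span_linear_malg (f := fun u => f (amul P (amul P u (<< p >> - << q >>)) v))).
  have amul_lin := linear_comp (amul_linearl P (<< p >> - << q >>)) (amul_linearl P v).
  exact: (linear_comp amul_lin f_lin).
move=> x /u_P x_P.
apply: (span_linear_malg (f := fun v => f (amul P (amul P << x >> (<< p >> - << q >>)) v))).
  exact: (linear_comp (amul_linearr P _) f_lin).
by move=> y /v_P y_P; apply: fT.
Qed.

Lemma tprod0l P Q b : tprod (k := k) P Q 0 b = 0.
Proof. exact: linear_map0 (tprod_linearl _ _ _). Qed.
Lemma tprod0r P Q a : tprod (k := k) P Q a 0 = 0.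
Proof. exact: linear_map0 (tprod_linearr _ _ _). Qed.

Lemma zetaU z : zeta (k := k) << z >> = << zetab z >>.
Proof. exact: linU. Qed.
Lemma zeta0 : zeta (k := k) 0 = 0.
Proof. exact: linear_map0 (linear_lin _). Qed.
Lemma zetaB : {morph zeta (k := k) : u v / u - v}.
Proof. exact: linear_mapB (linear_lin _). Qed.

End PresentedProducts.

Section DistributiveLaw.
Variables (k : fieldType) (sym simp : bool).
Local Notation C := (cpres sym).
Local Notation D := (dpres simp).
Local Open Scope ring_scope.

Lemma ceqv_ideal n t t' : ceqv sym n t t' ->
  ideal (k := k) C (<< (n, t) >> - << (n, t') >>).
Proof.
elim=> {t t'} [t|a c r r' a_n c_n mv|t t' _ It|t t' t'' _ It _ It'].
- by rewrite subrr; apply: span0.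
- apply: span_gen; have /andP[r_n r'_n] := cmove_cword mv.
  exists << (n, a) >>, << (n, c) >>, (n, r), (n, r').
  rewrite !pvalid_cpres; do !split => //; try by apply: vvalidU; rewrite pvalid_cpres.
    exact: cmove_prel.
  by rewrite amul_relUU ?ptgt_cpres // /ctgt !eqxx /wcat /= !catA.
- by rewrite -opprB; apply: spanN.
- by have := spanD It It'; rewrite addrA subrK.
Qed.

Lemma deqv_ideal m s s' : deqv simp m s s' ->
  ideal (k := k) D (<< (m, s) >> - << (m, s') >>).
Proof.
elim=> {s s'} [s|a c p q c_m a_m mv|s s' _ Is|s s' s'' _ Is _ Is'].
- by rewrite subrr; apply: span0.
- apply: span_gen; have /andP[p_m q_m] := dmove_dvalid mv.
  have [sz_p sz_q] := dmove_size mv.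
  exists << ((m + size c).+2, a) >>, << (m, c) >>, (m + size c, p), (m + size c, q).
  rewrite !pvalid_dpres; do !split => //; try by apply: vvalidU; rewrite pvalid_dpres.
    exact: dmove_prel.
  rewrite amul_relUU ?ptgt_dpres /dtgt ?sz_p ?sz_q //= addn2 !eqxx.
  by rewrite /wcat /= !catA.
- by rewrite -opprB; apply: spanN.
- by have := spanD Is Is'; rewrite addrA subrK.
Qed.

Lemma ker2_eqv L m c c' s s' :
  ceqv sym L c c' -> deqv simp m s s' -> cword L c' -> dvalid_s m s ->
  L = (m + size s)%N -> size s = size s' ->
  ker2 (k := k) C D (<< ((L, c), (m, s)) >> - << ((L, c'), (m, s')) >>).
Proof.
move=> eqv_c eqv_s c'_L s_m def_L sz_s.
have -> : << ((L, c), (m, s)) >> - << ((L, c'), (m, s')) >> =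
    tprod (k := k) C D (<< (L, c) >> - << (L, c') >>) << (m, s) >> +
    tprod C D << (L, c') >> (<< (m, s) >> - << (m, s') >>).
  rewrite tprod_diffUl // tprod_diffUr ?ptgt_dpres /dtgt -?sz_s //.
  by rewrite /= -def_L eqxx subrKA.
apply: spanD; apply: span_gen.
  exists (<< (L, c) >> - << (L, c') >>), << (m, s) >>; split=> //; left.
  by split; [apply: ceqv_ideal | apply: vvalidU; rewrite pvalid_dpres].
exists << (L, c') >>, (<< (m, s) >> - << (m, s') >>); split=> //; right.
by split; [apply: vvalidU; rewrite pvalid_cpres | apply: deqv_ideal].
Qed.

Lemma ker2_zetab_deqv m s s' t : deqv simp m s s' ->
  dvalid_s m s -> dvalid_s m s' -> cword m t ->
  ker2 (k := k) C D (<< zetab ((m, s), (m, t)) >> - << zetab ((m, s'), (m, t)) >>).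
Proof.
move=> eqv_s s_m s'_m t_m; have [eqv_c eqv_d] := zetaR_deqv sym eqv_s t_m.
have [_ s1_m sz_s] := zetaR_valid s_m t_m; have [c'_m _ _] := zetaR_valid s'_m t_m.
rewrite !zetabE -(deqv_size eqv_s) in c'_m *.
apply: ker2_eqv => //; first by rewrite sz_s.
by rewrite !size_zetaR !size_rev (deqv_size eqv_s).
Qed.

Lemma ker2_zetab_ceqv m s t t' : ceqv sym m t t' ->
  dvalid_s m s -> cword m t' ->
  ker2 (k := k) C D (<< zetab ((m, s), (m, t)) >> - << zetab ((m, s), (m, t')) >>).
Proof.
move=> eqv_t s_m t'_m; have [eq_s eqv_c] := zetaR_ceqv s_m eqv_t.
have [c'_m s1_m sz_s] := zetaR_valid s_m t'_m.
rewrite !zetabE eq_s; apply: ker2_eqv => //; first exact: deqv_refl.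
by rewrite sz_s.
Qed.

Lemma zeta_dmove_ker2 x y w p q : dvalid x -> dvalid y -> cvalid w -> prel D p q ->
  ker2 (k := k) C D
    (zeta (tprod D C (amul D (amul D << x >> (<< p >> - << q >>)) << y >>) << w >>)).
Proof.
case: x y w p q => [xm xs] [ym ys] [wm ws] [N ps] [N' qs] x_v y_v w_v.
case/prel_dpres => /= <- mv; have [sz_p sz_q] := dmove_size mv.
rewrite amul_relUU ?ptgt_dpres /dtgt /= ?sz_p ?sz_q //.
case: eqP => [def_xm|_] /=; last by rewrite tprod0l zeta0; apply: span0.
case: eqP => [def_N|_] /=; last by rewrite tprod0l zeta0; apply: span0.
rewrite tprod_diffUl // ptgt_cpres /ctgt /=.
case: eqP => [def_wm|_]; last by rewrite zeta0; apply: span0.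
rewrite zetaB !zetaU /wcat /= -!catA.
have ys_N : dvalid_s ym ys := y_v.
have xs_N : dvalid_s (ym + size ys).+2 xs by rewrite -addn2 -def_N -def_xm.
have /andP[ps_N qs_N] := dmove_dvalid mv.
apply: ker2_zetab_deqv; first by rewrite def_N in mv; apply: deqv_move.
- by rewrite !dvalid_s_cat ys_N -def_N ps_N size_cat sz_p addnCA add2n xs_N.
- by rewrite !dvalid_s_cat ys_N -def_N qs_N size_cat sz_q addnCA add2n xs_N.
- by rewrite def_wm.
Qed.

Lemma zeta_cmove_ker2 x u v r r' : dvalid x -> cvalid u -> cvalid v -> prel C r r' ->
  ker2 (k := k) C D
    (zeta (tprod D C << x >> (amul C (amul C << u >> (<< r >> - << r' >>)) << v >>))).
Proof.
case: x u v r r' => [xm xs] [um us] [vm vs] [n rs] [n' rs'] xs_v us_v vs_v.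
case/prel_cpres => /= <- mv; have /andP[rs_n rs'_n] := cmove_cword mv.
rewrite amul_relUU ?ptgt_cpres // /ctgt /=.
case: eqP => [def_um|_] /=; last by rewrite tprod0r zeta0; apply: span0.
case: eqP => [def_vm|_] /=; last by rewrite tprod0r zeta0; apply: span0.
rewrite tprod_diffUr ?ptgt_cpres // /ctgt /=.
case: eqP => [def_xm|_]; last by rewrite zeta0; apply: span0.
rewrite zetaB !zetaU /wcat /= -!catA.
rewrite /cvalid /= def_um def_vm -def_xm in us_v vs_v; rewrite def_vm -def_xm in mv rs_n rs'_n.
apply: ker2_zetab_ceqv => //; first exact: ceqv_move us_v vs_v mv.
by rewrite !all_cat us_v rs'_n vs_v.
Qed.

Lemma zeta_ker2 t : ker2 D C t -> ker2 (k := k) C D (zeta t).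
Proof.
move=> ker_t; apply: (span_linear_map (linear_lin zetab)) ker_t.
move=> _ [a [b [[[Ia b_C]|[a_D Ib]] ->]]].
- apply: (ideal_linear_span (f := fun a => zeta (tprod D C a b))) Ia _.
    exact: (linear_comp (tprod_linearl D C b) (linear_lin zetab)).
  move=> x y p q x_D y_D pq.
  apply: (span_linear_malg (f := fun b =>
    zeta (tprod D C (amul D (amul D << x >> (<< p >> - << q >>)) << y >>) b))).
    exact: (linear_comp (tprod_linearr D C _) (linear_lin zetab)).
  move=> w /b_C w_C; apply: zeta_dmove_ker2 => //.
  - by rewrite -(pvalid_dpres simp).
  - by rewrite -(pvalid_dpres simp).
  - by rewrite -(pvalid_cpres sym).
- apply: (span_linear_malg (f := fun a => zeta (tprod D C a b))).
    exact: (linear_comp (tprod_linearl D C b) (linear_lin zetab)).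
  move=> x /a_D x_D.
  apply: (ideal_linear_span (f := fun b => zeta (tprod D C << x >> b))) Ib _.
    exact: (linear_comp (tprod_linearr D C << x >>) (linear_lin zetab)).
  move=> u v r r' u_C v_C rr'; apply: zeta_cmove_ker2 => //.
  - by rewrite -(pvalid_dpres simp).
  - by rewrite -(pvalid_cpres sym).
  - by rewrite -(pvalid_cpres sym).
Qed.

Lemma zeta_mul_l R t : tens3 D D R t ->
  zeta (k := k) (lin mul_l t) = lin mul_r (lin zeta_l (lin zeta_r t)).
Proof.
move=> tens_t; have composable : forall u, u \in msupp t -> u.1.1.1 = dtgt u.1.2.
  apply: (span_msupp (P := fun u => u.1.1.1 = dtgt u.1.2) _ tens_t).
  move=> _ [a [b [c [_ [_ [_ ->]]]]]] u.
  by rewrite -(ptgt_dpres simp); apply: msupp_tprod3.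
rewrite /zeta !lin_comp; apply: eq_in_lin => -[[x y] z] /composable /=.
exact: zetab_mul_l.
Qed.

Lemma zeta_mul_r t :
  zeta (k := k) (lin mul_r t) = lin mul_l (lin zeta_r (lin zeta_l t)).
Proof.
by rewrite /zeta !lin_comp; apply: eq_in_lin => -[[x y] z] _; apply: zetab_mul_r.
Qed.

Lemma zeta_unitl b : zeta (k := k) (lin (fun x : word => (x, (x.1, [::]) : word)) b) =
  lin (fun x : word => ((ptgt D x, [::]) : word, x)) b.
Proof.
rewrite /zeta lin_comp; apply: eq_in_lin => -[m s] _.
by rewrite /= zetaR_nil /= revK ptgt_dpres.
Qed.

Lemma zeta_unitr a : zeta (k := k) (lin (fun y : word => ((ptgt C y, [::]) : word, y)) a) =
  lin (fun y : word => (y, (y.1, [::]) : word)) a.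
Proof.
rewrite /zeta lin_comp; apply: eq_in_lin => -[n t] _.
by rewrite /= ptgt_cpres natrDE addn0.
Qed.

Lemma descends_dpres_cpres : descends k D C.
Proof.
split; first exact: zeta_ker2.
split; first by move=> t tens_t; rewrite (zeta_mul_l tens_t) subrr; apply: span0.
split; first by move=> t _; rewrite zeta_mul_r subrr; apply: span0.
by split=> [b _|a _]; [rewrite zeta_unitl | rewrite zeta_unitr]; rewrite subrr; apply: span0.
Qed.

End DistributiveLaw.

Theorem mainTheorem9 (k : fieldType) :
  descends k Mag Braid /\ descends k Simp Braid /\
  descends k Mag Sym /\ descends k Simp Sym.
Proof.
split; first exact: (descends_dpres_cpres k false false).
split; first exact: (descends_dpres_cpres k false true).
split; first exact: (descends_dpres_cpres k true false).
exact: (descends_dpres_cpres k true true).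
Qed.
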